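(* Let $G$, $w$, $\nu$ be as in the context. Let $\widehat{\mathcal{S}}=(S_m)_{m=0,\ldots,n}$, $n\ge1$, be a finite sequence of pairwise disjoint subsets of $V(G)$ with $\widehat{K}_m>0$ and $\widehat{D}_m>0$ for all $m=0,\ldots,n-1$. Then for all $1\le p<\infty$ and all $f\in\ell^p_\nu(G)$ with $f|_{V(G)\setminus S_0}=0$, \[ \|f|_{S_0}\|_{p,\nu}\le\frac{\hat\delta_{\widehat{\mathcal{S}},p}}{\hat a_{\widehat{\mathcal{S}},p}-1}\|\nabla_w f\|_p. \]
   Context: $G$ is an undirected weighted graph: $V(G)$ is a (countable) vertex set and $w:V(G)\times V(G)\to[0,\infty)$ is symmetric with $w(u,u)=0$. $\nu:V(G)\to(0,\infty)$ is a fixed vertex weight; $\|f\|_{p,\nu}=\left(\sum_v|f(v)|^p\nu(v)\right)^{1/p}$, $\|f|_A\|_{p,\nu}$ the same sum over $v\in A$. $\|\nabla_w f\|_p=\left(\sum_{u,v\in V(G)}|f(u)-f(v)|^pw(u,v)\right)^{1/p}$. $w_A(v)=\sum_{u\in A}w(u,v)$. For $0\le m<n$: $\widehat{K}_m=\inf_{v\in S_m}\frac{w_{S_{m+1}}(v)}{\nu(v)}$, $\widehat{D}_m=\sup_{v\in S_{m+1}}\frac{w_{S_m}(v)}{\nu(v)}$; $\hat a_{\widehat{\mathcal{S}},p}=\left(\sum_{m=0}^n\prod_{j=0}^{m-1}\frac{\widehat{K}_j}{\widehat{D}_j}\right)^{1/p}$; $\hat\delta_{\widehat{\mathcal{S}},p}=\max_{k=0,\ldots,n-1}\frac{1}{\widehat{K}_k}\sum_{m=k}^n\prod_{i=k}^{m-1}\frac{\widehat{K}_i}{\widehat{D}_i}$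 for $p=1$, and $\hat\delta_{\widehat{\mathcal{S}},p}=\left(\sum_{m=1}^n\left(\sum_{k=0}^{m-1}\widehat{K}_k^{-q/p}\left(\prod_{i=k}^{m-1}\frac{\widehat{K}_i}{\widehat{D}_i}\right)^{q/p}\right)^{p/q}\right)^{1/p}$ for $1<p<\infty$, $1/p+1/q=1$. Empty products equal $1$, empty sums equal $0$. *)

From HB Require Import structures.
From mathcomp Require Import all_boot all_order all_algebra.
From mathcomp Require Import all_classical all_reals all_analysis.
Set Implicit Arguments. Unset Strict Implicit. Unset Printing Implicit Defensive.
Import Order.TTheory GRing.Theory Num.Theory.
Local Open Scope classical_set_scope.
Local Open Scope ring_scope.

Section Defs.
Variables (R : realType) (V : countType).

Definition lp_sum (p : R) (nu f : V -> R) (A : set V) : \bar R :=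
  esum A (fun v => ((`|f v| `^ p) * nu v)%:E).

Definition lp_norm (p : R) (nu f : V -> R) (A : set V) : \bar R :=
  poweR (lp_sum p nu f A) (p^-1).

Definition in_lp (p : R) (nu f : V -> R) : Prop :=
  (lp_sum p nu f setT < +oo)%E.

Definition grad_norm (p : R) (w : V -> V -> R) (f : V -> R) : \bar R :=
  poweR (esum [set: V * V]
           (fun uv => ((`|f uv.1 - f uv.2| `^ p) * w uv.1 uv.2)%:E)) (p^-1).

Definition wA (w : V -> V -> R) (A : set V) (v : V) : \bar R :=
  esum A (fun u => (w u v)%:E).

(* \hat K_m = inf_{v in S_m} w_{S_{m+1}}(v)/nu(v), taken as a real number
   (via fine; an infinite value is sent to 0, so the hypothesis K_m > 0
   forces it to be a genuine positive real). *)
Definition Khat (w : V -> V -> R) (nu : V -> R) (S : nat -> set V) (m : nat) : R :=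
  fine (ereal_inf [set (wA w (S m.+1) v * ((nu v)^-1)%:E)%E | v in S m]).

Definition Dhat (w : V -> V -> R) (nu : V -> R) (S : nat -> set V) (m : nat) : R :=
  fine (ereal_sup [set (wA w (S m) v * ((nu v)^-1)%:E)%E | v in S m.+1]).

Definition KDprod (w : V -> V -> R) (nu : V -> R) (S : nat -> set V) (k m : nat) : R :=
  \prod_(k <= i < m) (Khat w nu S i / Dhat w nu S i).

Definition ahat (w : V -> V -> R) (nu : V -> R) (S : nat -> set V) (n : nat) (p : R) : R :=
  (\sum_(0 <= m < n.+1) KDprod w nu S 0 m) `^ (p^-1).

Definition deltahat (w : V -> V -> R) (nu : V -> R) (S : nat -> set V) (n : nat) (p : R) : R :=
  if p == 1 then
    \big[Num.max/0]_(0 <= k < n)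
       ((Khat w nu S k)^-1 * \sum_(k <= m < n.+1) KDprod w nu S k m)
  else
    let q := p / (p - 1) in
    (\sum_(1 <= m < n.+1)
       (\sum_(0 <= k < m)
          (Khat w nu S k `^ (- (q / p))) * (KDprod w nu S k m `^ (q / p)))
         `^ (p / q)) `^ (p^-1).

End Defs.

Set Warnings "-notation-overridden,-ambiguous-paths,-notation-incompatible-prefix".
From HB Require Import structures.
From mathcomp Require Import all_boot all_order all_algebra.
From mathcomp Require Import all_classical all_reals all_analysis.
From mathcomp Require Import lra.
Set Implicit Arguments. Unset Strict Implicit. Unset Printing Implicit Defensive.
Import Order.TTheory GRing.Theory Num.Theory.
Local Open Scope classical_set_scope.
Local Open Scope ring_scope.

(* Every v in S_0 has w-mass
   at least K_0 nu(v) towards S_1, where f vanishes, so the edges between S_0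
   and S_1 alone give K_0 ||f|_{S_0}||^p <= ||grad f||^p.  It remains to see
   that the constant of the corollary dominates K_0^{-1/p}: with
   t = sum_{m=1}^n prod_{i<m} K_i/D_i we have a = (1+t)^{1/p} <= 1 + t^{1/p},
   while the k = 0 terms of delta already amount to (t / K_0)^{1/p}. *)

Section esum_facts.
Variables (R : realType) (T : choiceType).

Lemma esumZl (A : set T) (a : T -> \bar R) (c : R) :
  0 <= c -> (forall x, 0 <= a x)%E ->
  (\esum_(x in A) (c%:E * a x) = c%:E * \esum_(x in A) a x)%E.
Proof.
move=> c0 a0; rewrite /esum -ereal_supZl //; last first.
  by apply/set0P; exists 0%E; exists set0; [exact: fsets_set0|rewrite fsbig_set0].
congr ereal_sup; rewrite image_comp; apply: eq_imagel => F _ /=.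
by rewrite ge0_mule_fsumr.
Qed.

Lemma le_esum_setT (A : set T) (a b : T -> \bar R) :
  (forall x, A x -> a x <= b x)%E -> (forall x, 0 <= b x)%E ->
  (\esum_(x in A) a x <= \esum_(x in [set: T]) b x)%E.
Proof.
move=> ab b0; rewrite esum_mkcond; apply: le_esum => x _.
by case: ifPn => [/[!inE] /ab|].
Qed.

End esum_facts.

Definition grad_sum (R : realType) (V : countType) (p : R)
    (w : V -> V -> R) (f : V -> R) : \bar R :=
  esum [set: V * V] (fun uv => ((`|f uv.1 - f uv.2| `^ p) * w uv.1 uv.2)%:E).

Section poincare_first_layer.
Variables (R : realType) (V : countType) (w : V -> V -> R) (nu : V -> R).
Variable S : nat -> set V.
Hypothesis w_ge0 : forall u v, 0 <= w u v.
Hypothesis w_sym : forall u v, w u v = w v u.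
Hypothesis nu_gt0 : forall v, 0 < nu v.

Lemma Khat_mul_le_wA m v : 0 < Khat w nu S m -> S m v ->
  ((Khat w nu S m)%:E * (nu v)%:E <= wA w (S m.+1) v)%E.
Proof.
rewrite /Khat; set X := [set _ | _ in _] => K0 Smv.
have inf_le : (ereal_inf X <= wA w (S m.+1) v * ((nu v)^-1)%:E)%E.
  by apply: ereal_inf_lbound; exists v.
(* [fine] sends the infinite cases to 0, excluded by [K0]. *)
case: (ereal_inf X) K0 inf_le => [x| |] /=; rewrite ?ltxx // => _ inf_le.
have -> : wA w (S m.+1) v = (wA w (S m.+1) v * ((nu v)^-1)%:E * (nu v)%:E)%E.
  by rewrite -muleA -EFinM mulVf ?mule1 // lt0r_neq0.
by apply: lee_wpmul2r => //; rewrite lee_fin ltW.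
Qed.

Lemma Khat_lp_sum_le_grad_sum m p f :
  S m `&` S m.+1 = set0 -> 0 < Khat w nu S m ->
  (forall v, ~ S m v -> f v = 0) ->
  ((Khat w nu S m)%:E * lp_sum p nu f (S m) <= grad_sum p w f)%E.
Proof.
move=> Sm_disj K_gt0 f_supp.
have term_ge0 u v : (0 <= (`|f u| `^ p * w u v)%:E)%E.
  by rewrite lee_fin mulr_ge0 ?powR_ge0.
rewrite /lp_sum -esumZl; last 2 first.
- exact: ltW.
- by move=> v; rewrite lee_fin mulr_ge0 ?powR_ge0 // ltW.
apply: (@le_trans _ _ (\esum_(v in S m) \esum_(u in S m.+1)
                          (`|f v| `^ p * w v u)%:E)%E).
  apply: le_esum => v Smv.
  have -> : (\esum_(u in S m.+1) (`|f v| `^ p * w v u)%:E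
             = (`|f v| `^ p)%:E * wA w (S m.+1) v)%E.
    rewrite /wA -esumZl ?powR_ge0 // => [|u]; last by rewrite lee_fin.
    by apply: eq_esum => u _; rewrite EFinM w_sym.
  rewrite EFinM muleCA; apply: lee_wpmul2l; first by rewrite lee_fin powR_ge0.
  exact: Khat_mul_le_wA.
rewrite esum_esum; last by move=> *; exact: term_ge0.
apply: le_esum_setT => [[v u] /= [Smv Snu]|[u v]]; last first.
  by rewrite lee_fin mulr_ge0 ?powR_ge0.
have fu0 : f u = 0.
  by apply: f_supp => Smu; have : (S m `&` S m.+1) u by []; rewrite Sm_disj.
by rewrite fu0 subr0.
Qed.

Lemma lp_norm_le_Khat_grad_norm m p f :
  0 < p -> S m `&` S m.+1 = set0 -> 0 < Khat w nu S m ->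
  (forall v, ~ S m v -> f v = 0) ->
  (lp_norm p nu f (S m)
   <= ((Khat w nu S m)^-1 `^ p^-1)%:E * grad_norm p w f)%E.
Proof.
move=> p_gt0 Sm_disj K_gt0 f_supp.
have KB := Khat_lp_sum_le_grad_sum p Sm_disj K_gt0 f_supp.
set K := Khat w nu S m in K_gt0 KB *; set A := lp_sum p nu f (S m) in KB *.
have A_ge0 : (0 <= A)%E.
  by apply: esum_ge0 => v _; rewrite lee_fin mulr_ge0 ?powR_ge0 // ltW.
have B_ge0 : (0 <= grad_sum p w f)%E.
  by apply: esum_ge0 => uv _; rewrite lee_fin mulr_ge0 ?powR_ge0.
have Ki_ge0 : 0 <= K^-1 by rewrite invr_ge0 ltW.
have AB : (A <= K^-1%:E * grad_sum p w f)%E.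
  have -> : A = (K^-1%:E * (K%:E * A))%E.
    by rewrite muleA -EFinM mulVf ?mul1e // lt0r_neq0.
  by apply: lee_wpmul2l; rewrite ?lee_fin.
rewrite /lp_norm /grad_norm -/(grad_sum p w f).
apply: (@le_trans _ _ (poweR (K^-1%:E * grad_sum p w f) p^-1)).
  apply: gt0_ler_poweR => //; first by rewrite invr_ge0 ltW.
  by rewrite in_itv /= A_ge0 leey.
  by rewrite in_itv /= mule_ge0 ?leey // lee_fin.
by rewrite poweRM ?lee_fin // poweR_EFin.
Qed.

End poincare_first_layer.

Lemma powR_1D_le (R : realType) (t r : R) : 0 < t -> 0 <= r <= 1 ->
  (1 + t) `^ r <= 1 + t `^ r.
Proof.
move=> t_gt0 /andP[r_ge0 r_le1]; set s := 1 + t.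
have s_gt0 : 0 < s by rewrite /s; lra.
(* x^r >= s^r (x/s) for 0 < x <= s, since (x/s)^r >= x/s; add up x = 1 and x = t. *)
have chord x : 0 < x <= s -> s `^ r * (x / s) <= x `^ r.
  move=> /andP[x_gt0 x_les].
  have /andP[xs_gt0 xs_le1] : 0 < x / s <= 1 by rewrite divr_gt0 //= ler_pdivrMr // mul1r.
  have xE : x = (x / s) * s by rewrite divfK // lt0r_neq0.
  rewrite [X in _ <= X `^ r]xE powRM; [|exact: ltW|exact: ltW].
  by rewrite mulrC ler_wpM2r ?powR_ge0 // ger1_powR //; apply/andP.
have -> : s `^ r = s `^ r * (1 / s) + s `^ r * (t / s).
  by rewrite -mulrDr -mulrDl /s divff ?mulr1 // lt0r_neq0.
have := chord 1; rewrite powR1 => chord1.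
apply: lerD; [apply: chord1|apply: chord]; rewrite /s; apply/andP; split; lra.
Qed.

Section constants.
Variables (R : realType) (V : countType) (w : V -> V -> R) (nu : V -> R).
Variables (S : nat -> set V) (n : nat).
Hypothesis n_ge1 : (1 <= n)%N.
Hypothesis K_gt0 : forall m, (m < n)%N -> 0 < Khat w nu S m.
Hypothesis D_gt0 : forall m, (m < n)%N -> 0 < Dhat w nu S m.

Local Notation K := (Khat w nu S).
Local Notation P := (KDprod w nu S).
Local Notation tail := (\sum_(1 <= m < n.+1) P 0 m).

Lemma KDprod_gt0 k m : (m <= n)%N -> 0 < P k m.
Proof.
move=> m_le_n; rewrite /KDprod big_seq; apply: prodr_gt0 => i.
rewrite mem_index_iota => /andP[_ i_lt_m].
by apply: divr_gt0; [apply: K_gt0|apply: D_gt0]; exact: leq_trans i_lt_m m_le_n.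
Qed.

Lemma tail_gt0 : 0 < tail.
Proof.
rewrite big_ltn //; apply: ltr_pwDl; first exact: KDprod_gt0.
by rewrite big_seq sumr_ge0 // => m /[!mem_index_iota] /andP[_ ?]; exact/ltW/KDprod_gt0.
Qed.

Lemma KDprod_sum0E : \sum_(0 <= m < n.+1) P 0 m = 1 + tail.
Proof. by rewrite big_ltn // /KDprod big_geq. Qed.

Lemma ahatE p : ahat w nu S n p = (1 + tail) `^ p^-1.
Proof. by rewrite /ahat KDprod_sum0E. Qed.

Lemma deltahat1_ge : (K 0)^-1 * tail <= deltahat w nu S n 1.
Proof.
have K0_gt0 := K_gt0 n_ge1.
rewrite /deltahat eqxx [X in _ <= X]big_ltn // le_max KDprod_sum0E; apply/orP; left.
by rewrite ler_wpM2l ?invr_ge0 ?(ltW K0_gt0) // lerDr.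
Qed.

Lemma deltahat_gt1_ge p : 1 < p -> ((K 0)^-1 * tail) `^ p^-1 <= deltahat w nu S n p.
Proof.
move=> p_gt1; have K0_gt0 := K_gt0 n_ge1.
rewrite /deltahat gt_eqF //=; set e := _ / p.
have e_gt0 : 0 < e by rewrite divr_gt0 ?divr_gt0 //; lra.
have eVe : e * e^-1 = 1 by rewrite divff // lt0r_neq0.
have summand_ge0 m k : 0 <= K k `^ (- e) * P k m `^ e by rewrite mulr_ge0 ?powR_ge0.
rewrite -[p / (p / (p - 1))]invf_div -/e.
have t_gt0 := tail_gt0.
apply: ge0_ler_powR; rewrite ?nnegrE.
- by rewrite invr_ge0; lra.
- by rewrite mulr_ge0 ?invr_ge0 ?ltW.
- by rewrite big_seq sumr_ge0 // => m _; rewrite powR_ge0.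
rewrite mulr_sumr !big_seq; apply: ler_sum => m /[!mem_index_iota] /andP[m_ge1 m_le_n].
have P0m_gt0 := KDprod_gt0 0 m_le_n.
(* The k = 0 summand, raised to 1/e, is exactly P_{0m} / K_0. *)
apply: (@le_trans _ _ ((K 0 `^ (- e) * P 0 m `^ e) `^ e^-1)).
  rewrite powRM ?powR_ge0 // -!powRrM eVe mulNr eVe powR_inv1 ?(ltW K0_gt0) //.
  by rewrite powRr1 ?(ltW P0m_gt0).
apply: ge0_ler_powR; rewrite ?nnegrE.
- by rewrite invr_ge0 ltW.
- exact: summand_ge0.
- by rewrite big_seq sumr_ge0.
- by rewrite big_ltn // lerDl big_seq sumr_ge0.
Qed.

Lemma Khat0_powR_le_deltahat_ahat p : 1 <= p ->
  (K 0)^-1 `^ p^-1 <= deltahat w nu S n p / (ahat w nu S n p - 1).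
Proof.
move=> p_ge1; have K0_gt0 := K_gt0 n_ge1; have t_gt0 := tail_gt0.
have r_gt0 : 0 < p^-1 by rewrite invr_gt0; lra.
have r_le1 : p^-1 <= 1 by rewrite invf_le1 //; lra.
have a_gt1 : 1 < ahat w nu S n p.
  rewrite ahatE; apply: (@le_lt_trans _ _ (1 `^ p^-1)); first by rewrite powR1.
  by rewrite gt0_ltr_powR ?nnegrE //; lra.
have delta_ge : ((K 0)^-1 * tail) `^ p^-1 <= deltahat w nu S n p.
  have [->|p_neq1] := eqVneq p 1.
    by rewrite invr1 powRr1 ?deltahat1_ge // mulr_ge0 ?invr_ge0 ?ltW.
  by apply: deltahat_gt1_ge; rewrite lt_neqAle eq_sym p_neq1.
rewrite ler_pdivlMr ?subr_gt0 //; apply: le_trans delta_ge.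
rewrite powRM ?invr_ge0 ?(ltW K0_gt0) ?(ltW t_gt0) //.
rewrite ler_wpM2l ?powR_ge0 // ahatE lerBlDl.
by apply: powR_1D_le; rewrite // (ltW r_gt0) r_le1.
Qed.

End constants.

Theorem corollary1p6 (R : realType) (V : countType)
  (w : V -> V -> R) (nu : V -> R)
  (w_ge0 : forall u v, 0 <= w u v)
  (w_sym : forall u v, w u v = w v u)
  (w_diag : forall u, w u u = 0)
  (nu_gt0 : forall v, 0 < nu v)
  (n : nat) (S : nat -> set V)
  (n_ge1 : (1 <= n)%N)
  (S_disj : forall i j, (i <= n)%N -> (j <= n)%N -> i <> j -> S i `&` S j = set0)
  (K_gt0 : forall m, (m < n)%N -> 0 < Khat w nu S m)
  (D_gt0 : forall m, (m < n)%N -> 0 < Dhat w nu S m)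
  (p : R) (p_ge1 : 1 <= p)
  (f : V -> R) (f_lp : in_lp p nu f)
  (f_supp : forall v, ~ S 0%N v -> f v = 0) :
  (lp_norm p nu f (S 0%N)
   <= (deltahat w nu S n p / (ahat w nu S n p - 1))%:E * grad_norm p w f)%E.
Proof.
have p_gt0 : 0 < p by apply: lt_le_trans p_ge1.
have S01_disj : S 0%N `&` S 1%N = set0 by apply: S_disj.
apply: (le_trans (lp_norm_le_Khat_grad_norm w_ge0 w_sym nu_gt0 p_gt0 S01_disj
                  (K_gt0 0%N n_ge1) f_supp)).
apply: lee_wpmul2r; first exact: poweR_ge0.
by rewrite lee_fin (Khat0_powR_le_deltahat_ahat n_ge1 K_gt0 D_gt0 p_ge1).
Qed.
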